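(* Let $a,b$ be integers with $0<b<a$, let $S=\langle a,a+1,\ldots,a+b\rangle$ with conductor $c$ and genus $g$, and let $m\ge 2c-1$. Let $m=m_1<m_2<\cdots<m_t$ be integers such that $\{m_1,\ldots,m_t\}$ is amenable, and assume that $\{m_1,\ldots,m_t\}\cap[m,m+a+b)=\{m,m+1,\ldots,m+l-1\}$ for some positive integer $l$. Then $$\sharp\mathrm D(m_1,\ldots,m_t)=m-2g+t+\sum_{j=1}^{l-1}\left\lceil\frac{a-j}{b}\right\rceil.$$
   Context: The genus of a numerical semigroup $S$ is $g=\sharp(\mathbb N\setminus S)$ and its conductor $c$ is the least element of $S$ with $c+n\in S$ for all $n\in\mathbb N$. For $x\in S$, $\mathrm D(x)=\{\alpha\in S\mid x-\alpha\in S\}$, and $\mathrm D(x_1,\ldots,x_t)=\mathrm D(x_1)\cup\cdots\cup\mathrm D(x_t)$. A set $M=\{m_1<\cdots<m_t\}\subseteq S$ with $2c-1\le m=m_1$ is amenable if $\mathrm D(m_i)\cap[m,\infty)\subseteq M$ for all $i$. *)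

From mathcomp Require Import all_boot all_order all_algebra.
Set Implicit Arguments. Unset Strict Implicit. Unset Printing Implicit Defensive.

(* Computed by recursion with fuel; since a > 0 every
   generator is >= 1, so fuel n suffices to decide membership of n. *)
Fixpoint memS_fuel (a b fuel n : nat) : bool :=
  match fuel with
  | 0 => n == 0
  | f.+1 => (n == 0) ||
      [exists i : 'I_b.+1, (a + i <= n) && memS_fuel a b f (n - (a + i))]
  end.

Definition inS (a b n : nat) : bool := memS_fuel a b n n.

Definition is_conductor (a b c : nat) : Prop :=
  [/\ inS a b c, (forall n, inS a b (c + n)) &
      (forall c', inS a b c' -> (forall n, inS a b (c' + n)) -> c <= c')].

(* genus: number of gaps; all gaps are below the conductor c. *)
Definition genus_below (a b c : nat) : nat :=
  count (fun n => ~~ inS a b n) (iota 0 c).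

Definition inD (a b x alpha : nat) : bool :=
  [&& alpha <= x, inS a b alpha & inS a b (x - alpha)].

Definition Dunion (a b : nat) (M : seq nat) : seq nat :=
  [seq alpha <- iota 0 (\max_(x <- M) x).+1 | has (fun x => inD a b x alpha) M].

Definition amenable (a b c : nat) (M : seq nat) : Prop :=
  match M with
  | [::] => False
  | m :: _ =>
      [/\ sorted ltn M, 2 * c - 1 <= m, all (inS a b) M &
          forall x alpha, x \in M -> inD a b x alpha -> m <= alpha -> alpha \in M]
  end.

From mathcomp Require Import all_boot all_order all_algebra zify.
Import Order.TTheory GRing.Theory Num.Theory.
Set Implicit Arguments. Unset Strict Implicit. Unset Printing Implicit Defensive.

(* n lies in S = <a, ..., a + b> iff n %% a <= (n %/ a) * b, so every gap h is
   below a^2 and the least d with h + d in S is a - h %% a.  Split D(M) at m.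
   Above m, amenability gives D(M) = M.  Below m, an alpha with m - alpha in S
   lies in D(M) iff it lies in D(m), and #D(m) = m + 1 - 2g because m >= 2c - 1
   forbids alpha and m - alpha from both being gaps.  The other alphas are
   m - h for a gap h, and m - h lies in D(M) iff h + d lies in S for some
   m + d in M; amenability pulls such a d back into the window [0, a + b),
   where m + d in M means d < l, so the condition is a - h %% a < l.  Counting
   these gaps h = q a + r block by block (q b < r and a - l < r) and counting
   the pairs (q, j = a - r) the other way gives the sum of the ceilings. *)

Section Semigroup.

Variables a b : nat.
Hypothesis a_gt0 : 0 < a.

Lemma memS_fuelP f n : n <= f ->
  memS_fuel a b f n <-> exists k, k * a <= n <= k * (a + b).
Proof.
elim: f n => [|f IH] n n_le /=.
  have -> : n = 0 by lia.
  by split=> // _; exists 0.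
split.
- case/orP => [/eqP -> | /existsP [i /andP [le_ain /IH[|k hk]]]]; first by exists 0.
    by have := ltn_ord i; lia.
  exists k.+1; have := ltn_ord i; rewrite !mulSn; lia.
- case=> [[|k] hk]; first by rewrite /= !mul0n in hk; apply/orP; left; lia.
  apply/orP; right; have ib : minn b (n - k.+1 * a) < b.+1 by rewrite ltnS geq_minl.
  apply/existsP; exists (Ordinal ib); apply/andP; split => /=.
    by rewrite mulSn in hk; lia.
  by apply/IH; [lia | exists k; rewrite !mulSn in hk; lia].
Qed.

Lemma inSP n : reflect (exists k, k * a <= n <= k * (a + b)) (inS a b n).
Proof. by apply: (iffP idP) => /(memS_fuelP (leqnn n)). Qed.

Lemma inS_divmod n : inS a b n = (n %% a <= n %/ a * b).
Proof.
have n_eq := divn_eq n a; apply/inSP/idP => [[k hk] | h]; last first.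
  by exists (n %/ a); lia.
have k_le : k <= n %/ a by rewrite leq_divRL //; lia.
have := leq_mul2r a k (n %/ a); have := leq_mul2r b k (n %/ a).
rewrite k_le !orbT; lia.
Qed.

Lemma inS_multiple k : inS a b (k * a).
Proof. by apply/inSP; exists k; lia. Qed.

Lemma gap_shift_ge h d : ~~ inS a b h -> inS a b (h + d) -> a - h %% a <= d.
Proof.
rewrite !inS_divmod -ltnNge => gap_h; apply: contraLR; rewrite -ltnNge => lt_d.
have h_eq : h + d = h %/ a * a + (h %% a + d) by rewrite {1}(divn_eq h a); lia.
have := ltn_pmod h a_gt0; rewrite h_eq modnMDl divnMDl //.
by rewrite (modn_small (m := h %% a + d)) ?(divn_small (m := h %% a + d)); lia.
Qed.

Lemma inS_window_split h n : inS a b n -> h + a + b <= n ->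
  exists u, [/\ h <= u, u < h + a + b, u <= n, inS a b u & inS a b (n - u)].
Proof.
move=> /inSP [K hK] n_ge.
(* [L k] splits n into k and K - k generators; it grows by at most a + b per
   step, so the first [L k >= h] falls into the window. *)
pose L k := maxn (k * a) (n - (K - k) * (a + b)).
have L_split k : k <= K -> [/\ inS a b (L k), inS a b (n - L k) & L k <= n].
  move=> k_le; rewrite /L; have : K = k + (K - k) by lia.
  move: (K - k) => e K_eq; rewrite K_eq !mulnDl in hK; split; try lia.
  - by apply/inSP; exists k; lia.
  - by apply/inSP; exists e; lia.
have exL : exists k, (k <= K) && (h <= L k) by exists K; rewrite leqnn /L subnn; lia.
case: (ex_minnP exL) => k /andP [k_le h_le] k_min.
have [Lk_S Lk_S' Lk_le] := L_split k k_le.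
exists (L k); split=> //.
case: k k_le h_le k_min {Lk_S Lk_S' Lk_le} => [|k] k_le h_le k_min; first by rewrite /L; lia.
have : ~~ ((k <= K) && (h <= L k)) by apply: contraTN isT => /k_min; rewrite ltnn.
rewrite /L (ltnW k_le) /= -ltnNge (_ : K - k = (K - k.+1).+1); last lia.
rewrite mulSn; lia.
Qed.

Lemma gap_lt_sq h : 0 < b -> ~~ inS a b h -> h < a * a.
Proof.
move=> b_gt0; rewrite inS_divmod -ltnNge => gap_h.
have : h %/ a < a by have := ltn_pmod h a_gt0; have := leq_pmulr (h %/ a) b_gt0; lia.
rewrite -(leq_pmul2r a_gt0) mulSn; have := divn_eq h a; have := ltn_pmod h a_gt0; lia.
Qed.

End Semigroup.

Lemma count_iota_mirror (P : pred nat) n :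
  count (fun i => P (n - i)) (iota 0 n.+1) = count P (iota 0 n.+1).
Proof.
rewrite -!sum1_count [LHS]big_mkcond [RHS]big_mkcond.
rewrite -[iota 0 n.+1]/(index_iota 0 n.+1) big_nat_rev.
by apply: eq_big_nat => i /andP [_ i_le]; rewrite add0n subSS subKn.
Qed.

Lemma count_iota_widen (P : pred nat) n k : (forall i, P i -> i < n) -> n <= k ->
  count P (iota 0 k) = count P (iota 0 n).
Proof.
move=> P_lt /subnKC <-; rewrite iotaD count_cat -[RHS]addn0; congr (_ + _).
apply/eqP; rewrite -leqn0 leqNgt -has_count; apply/hasPn => i.
by rewrite mem_iota add0n => /andP [n_le _]; apply: contraL n_le => /P_lt; rewrite -ltnNge.
Qed.

Lemma count_gtn_iota x n : count (fun r => x < r) (iota 0 n) = n - x.+1.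
Proof. by elim: n => // n IH; rewrite -[n.+1]addn1 iotaD count_cat IH /=; case: ltnP; lia. Qed.

Section Conductor.

Variables a b c : nat.
Hypothesis conductor_c : is_conductor a b c.

Lemma inS_ge_conductor n : c <= n -> inS a b n.
Proof. by case: conductor_c => _ inS_cD _ /subnKC <-. Qed.

Lemma gap_lt_conductor n : ~~ inS a b n -> n < c.
Proof. by rewrite ltnNge; apply: contra; apply: inS_ge_conductor. Qed.

Lemma count_gaps n : c <= n -> count (predC (inS a b)) (iota 0 n) = genus_below a b c.
Proof. exact: count_iota_widen gap_lt_conductor. Qed.

Lemma count_inD x : 2 * c - 1 <= x ->
  count (inD a b x) (iota 0 x.+1) = x.+1 - 2 * genus_below a b c.
Proof.
move=> x_ge; have c_le : c <= x.+1 by lia.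
set P := inS a b; set Q := inS a b \o subn x.
have -> : count (inD a b x) (iota 0 x.+1) = count (predI P Q) (iota 0 x.+1).
  by apply: eq_in_count => i; rewrite mem_iota add0n ltnS /inD => /andP [_ ->].
have no_double_gap : count (predI (predC P) (predC Q)) (iota 0 x.+1) = 0.
  apply/eqP; rewrite -leqn0 leqNgt -has_count; apply/hasPn => i; rewrite mem_iota /=.
  by apply: contraL => /andP [/gap_lt_conductor i_lt /gap_lt_conductor]; lia.
have gapsP : count (predC P) (iota 0 x.+1) = genus_below a b c by apply: count_gaps.
have gapsQ : count (predC Q) (iota 0 x.+1) = genus_below a b c.
  by rewrite (count_iota_mirror (predC P)); apply: count_gaps.
have := count_predUI (predC P) (predC Q) (iota 0 x.+1).
have := count_predC (predI P Q) (iota 0 x.+1).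
have -> : count (predC (predI P Q)) (iota 0 x.+1) =
          count (predU (predC P) (predC Q)) (iota 0 x.+1).
  by apply: eq_count => i; rewrite /= negb_and.
rewrite no_double_gap gapsP gapsQ size_iota; lia.
Qed.

End Conductor.

(* [a - h %% a] is the distance from the gap [h] to the next element of S
   (see [gap_shift_ge]). *)
Definition near_gap (a b l h : nat) : bool := ~~ inS a b h && (a - h %% a < l).

Lemma ceil_subn_div (R : archiRealFieldType) (a b j : nat) : 0 < b -> j < a + b ->
  (Num.ceil (((a%:Z - j%:Z)%:~R : R) / b%:R) = ((a - j + b.-1) %/ b)%N%:Z)%R.
Proof.
move=> b_gt0 j_lt; have b_posR : (0 < b%:R :> R)%R by rewrite ltr0n.
have := divn_eq (a - j + b.-1) b; have := ltn_pmod (a - j + b.-1) b_gt0.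
move: ((a - j + b.-1) %/ b) ((a - j + b.-1) %% b) => q r r_lt qr_eq.
have -> : (b%:R = (b%:Z)%:~R :> R)%R by [].
apply: ceil_def; rewrite ltr_pdivlMr // ler_pdivrMr // -!intrM ltr_int ler_int.
have qb0 : a <= j -> q * b = 0.
  move=> le_aj; suff -> : q = 0 by [].
  by apply/eqP; rewrite -leqn0 -ltnS -(ltn_pmul2r b_gt0); lia.
by apply/andP; split; rewrite ?mulrBl ?mul1r -?PoszM; lia.
Qed.

Lemma ceil_divn_sum b n K : 0 < b -> n <= K ->
  (n + b.-1) %/ b = \sum_(0 <= q < K) (q * b < n : nat).
Proof.
move=> b_gt0 n_le; set z := (n + b.-1) %/ b.
have ltn_z q : (q * b < n) = (q < z).
  by rewrite /z -[q < _]/(q.+1 <= _) leq_divRL // mulSn; apply/idP/idP; lia.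
have z_le : z <= K.
  rewrite /z -ltnS ltn_divLR // mulSn; have := leq_pmulr K b_gt0; lia.
rewrite -big_mkcond /= sum1_count /= (eq_count ltn_z) /=.
rewrite -size_filter /index_iota subn0 (@eq_filter _ _ (fun i => i < 0 + z)) //.
by rewrite filter_iota_ltn // size_iota.
Qed.

Section NearGaps.

Variables a b l : nat.
Hypotheses (a_gt0 : 0 < a) (b_gt0 : 0 < b).

Lemma count_near_gap_blocks K : count (near_gap a b l) (iota 0 (K * a)) =
  \sum_(0 <= q < K) (a - (maxn (q * b) (a - l)).+1).
Proof.
elim: K => [|K IH]; first by rewrite big_geq.
rewrite mulSnr iotaD count_cat IH big_nat_recr //=; congr (_ + _).
rewrite add0n -[K * a]addn0 iotaDl count_map -count_gtn_iota; apply/eq_in_count => r.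
rewrite mem_iota add0n => /andP [_ r_lt] /=.
rewrite /near_gap inS_divmod // modnMDl divnMDl // modn_small // divn_small // addn0.
by rewrite -ltnNge; apply/andP/idP; lia.
Qed.

(* Both sides count the pairs (j, q) with 1 <= j < l and q * b < a - j. *)
Lemma sum_ceil_blocks : 0 < l ->
  \sum_(1 <= j < l) (a - j + b.-1) %/ b = \sum_(0 <= q < a) (a - (maxn (q * b) (a - l)).+1).
Proof.
case: l => // k _; elim: k => [|k IH].
  by rewrite big_geq // big1 // => q _; lia.
rewrite big_nat_recr //= IH (@ceil_divn_sum b _ a) ?leq_subr // -big_split /=.
by apply: eq_bigr => q _; case: ltnP => /=; lia.
Qed.

Lemma near_gap_lt_sq h : near_gap a b l h -> h < a * a.
Proof. by case/andP => /(gap_lt_sq a_gt0 b_gt0). Qed.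

End NearGaps.

Lemma count_near_gap a b c l n : 0 < a -> 0 < b -> is_conductor a b c -> 0 < l ->
  c <= n -> count (near_gap a b l) (iota 0 n) = \sum_(1 <= j < l) (a - j + b.-1) %/ b.
Proof.
move=> a_gt0 b_gt0 conductor_c l_gt0 c_le.
have near_gap_lt_n h : near_gap a b l h -> h < n.
  by case/andP => /(gap_lt_conductor conductor_c) h_lt _; apply: leq_trans c_le.
rewrite sum_ceil_blocks // -count_near_gap_blocks //.
rewrite -(count_iota_widen near_gap_lt_n (leq_addr (a * a) n)).
exact: count_iota_widen (near_gap_lt_sq a_gt0 b_gt0) (leq_addl _ _).
Qed.

Definition inDunion (a b : nat) (M : seq nat) (alpha : nat) : bool :=
  has (fun x => inD a b x alpha) M.

Section Amenable.

Variables a b c m l : nat.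
Variable ms : seq nat.
Hypotheses (a_gt0 : 0 < a) (b_gt0 : 0 < b).
Hypothesis conductor_c : is_conductor a b c.
Hypothesis amenable_M : amenable a b c (m :: ms).
Hypothesis window_M :
  forall n, (n \in m :: ms) && (m <= n < m + a + b) = (m <= n < m + l).

Local Notation M := (m :: ms).

Let sorted_M : sorted ltn M. Proof. by case: amenable_M. Qed.
Let m_ge : 2 * c - 1 <= m. Proof. by case: amenable_M. Qed.
Let inS_M x : x \in M -> inS a b x.
Proof. by case: amenable_M => _ _ /allP inS_all _; apply: inS_all. Qed.
Let closed_M x alpha : x \in M -> inD a b x alpha -> m <= alpha -> alpha \in M.
Proof. by case: amenable_M => _ _ _; apply. Qed.

Lemma head_le_mem x : x \in M -> m <= x.
Proof.
rewrite inE => /orP [/eqP -> //|x_ms].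
by have /allP /(_ x x_ms) /ltnW := order_path_min ltn_trans sorted_M.
Qed.

Lemma mem_window d : d < a + b -> (m + d \in M) = (d < l).
Proof.
move=> d_lt; have := window_M (m + d).
by rewrite leq_addr -addnA !ltn_add2l d_lt !andbT => ->.
Qed.

Lemma window_le : l <= a + b.
Proof.
have := window_M (m + a + b); rewrite ltnn !andbF -addnA leq_addr ltn_add2l /=.
by move=> not_lt; rewrite leqNgt -not_lt.
Qed.

Lemma gap_shift_lt h x : ~~ inS a b h -> x \in M -> m - h <= x ->
  inS a b (x - (m - h)) -> a - h %% a < l.
Proof.
move=> gap_h x_M x_ge inS_hx; have h_lt := gap_lt_conductor conductor_c gap_h.
have m_le := head_le_mem x_M; set d := x - m.
have inS_hd : inS a b (h + d) by rewrite (_ : h + d = x - (m - h)) //; lia.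
suff [e [e_M e_lt inS_he]] : exists e, [/\ m + e \in M, e < a + b & inS a b (h + e)].
  by have := gap_shift_ge a_gt0 gap_h inS_he; move: e_M; rewrite mem_window //; lia.
have [d_lt | d_ge] := ltnP d (a + b); first by exists d; rewrite /d subnKC.
have [|u [h_le u_lt u_le inS_u inS_hdu]] :=
  inS_window_split a_gt0 (h := h) inS_hd; first lia.
exists (u - h); split; [|lia | by rewrite subnKC].
apply: (closed_M x_M); last lia.
rewrite /inD (inS_ge_conductor conductor_c) //=; last lia.
by rewrite (_ : x - (m + (u - h)) = h + d - u) ?inS_hdu; lia.
Qed.

Lemma inDunion_gap h : ~~ inS a b h -> inDunion a b M (m - h) = (a - h %% a < l).
Proof.
move=> gap_h; have h_lt := gap_lt_conductor conductor_c gap_h.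
have inS_mh : inS a b (m - h) by apply: (inS_ge_conductor conductor_c); lia.
rewrite /inDunion; apply/hasP/idP => [[x x_M /and3P [x_ge _ inS_x]] | lt_l].
  exact: gap_shift_lt x_M x_ge inS_x.
exists (m + (a - h %% a)); first by rewrite mem_window //; lia.
have := divn_eq h a; have := ltn_pmod h a_gt0.
rewrite /inD inS_mh (_ : _ - (m - h) = (h %/ a).+1 * a) ?inS_multiple //= ?mulSn; lia.
Qed.

Lemma inDunion_lt alpha : alpha < m ->
  inDunion a b M alpha = inD a b m alpha || near_gap a b l (m - alpha).
Proof.
move=> alpha_lt; rewrite /near_gap.
have [inS_m_alpha | gap] := boolP (inS a b (m - alpha)).
  rewrite orbF /inDunion; apply/hasP/idP => [[x _ /and3P [_ inS_alpha _]] | ]; last first.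
    by exists m; rewrite ?mem_head.
  by rewrite /inD (ltnW alpha_lt) inS_alpha inS_m_alpha.
by rewrite /inD (negbTE gap) !andbF /= -inDunion_gap // subKn // ltnW.
Qed.

Lemma inDunion_ge alpha : m <= alpha -> inDunion a b M alpha = (alpha \in M).
Proof.
move=> alpha_ge; rewrite /inDunion; apply/hasP/idP => [[x x_M /(closed_M x_M)] | alpha_M].
  exact.
by exists alpha; rewrite // /inD leqnn inS_M // subnn.
Qed.

Lemma count_inDunion_lt :
  count (inDunion a b M) (iota 0 m) + 2 * genus_below a b c =
  m + count (near_gap a b l) (iota 0 m.+1).
Proof.
set D := inD a b m; set N := near_gap a b l \o subn m.
have -> : count (inDunion a b M) (iota 0 m) = count (predU D N) (iota 0 m).
  by apply: eq_in_count => alpha; rewrite mem_iota => /andP [_ /inDunion_lt].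
have disjoint : count (predI D N) (iota 0 m) = 0.
  apply/eqP; rewrite -leqn0 leqNgt -has_count; apply/hasPn => alpha _.
  by rewrite /= /D /N /inD /near_gap /=; case: (inS a b (m - alpha)); rewrite ?andbF.
have split_last (P : pred nat) : count P (iota 0 m.+1) = count P (iota 0 m) + P m.
  by rewrite -addn1 iotaD count_cat /= addn0.
have count_D : count D (iota 0 m) + 1 = m.+1 - 2 * genus_below a b c.
  by rewrite -(count_inD conductor_c m_ge) split_last /D /inD leqnn subnn inS_M ?mem_head.
have count_N : count N (iota 0 m) = count (near_gap a b l) (iota 0 m.+1).
  by rewrite -(count_iota_mirror (near_gap a b l)) split_last subnn addn0.
have := count_predUI D N (iota 0 m); rewrite disjoint count_N; clearbody D N; lia.
Qed.

Lemma count_inDunion_ge n : (forall x, x \in M -> x < m + n) ->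
  count (inDunion a b M) (iota m n) = size M.
Proof.
move=> M_lt; rewrite (@eq_in_count _ _ (mem M)); last first.
  by move=> alpha; rewrite mem_iota => /andP [/inDunion_ge].
rewrite -size_filter; congr size; apply: (irr_sorted_eq ltn_trans ltnn) => //.
  exact/sorted_filter/iota_ltn_sorted/ltn_trans.
move=> x; rewrite mem_filter mem_iota andbC; apply/andP/idP => [[] // | x_M].
by rewrite head_le_mem ?M_lt.
Qed.

Lemma size_Dunion : size (Dunion a b M) + 2 * genus_below a b c =
  m + size M + count (near_gap a b l) (iota 0 m.+1).
Proof.
have le_max x : x \in M -> x <= \max_(y <- M) y by move=> x_M; apply: leq_bigmax_seq.
have m_le : m <= (\max_(y <- M) y).+1 by rewrite ltnW // ltnS le_max ?mem_head.
rewrite /Dunion size_filter -(subnKC m_le) iotaD count_cat add0n.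
rewrite (count_inDunion_ge (n := _ - m)) => [|x /le_max]; last by rewrite subnKC.
by have := count_inDunion_lt; rewrite /inDunion; lia.
Qed.

End Amenable.

Theorem corollary4p8 (a b c g m l : nat) (ms : seq nat)
  (hb : 0 < b) (hba : b < a)
  (hc : is_conductor a b c) (hg : g = genus_below a b c)
  (hm : 2 * c - 1 <= m)
  (hsort : sorted ltn (m :: ms))
  (hamen : amenable a b c (m :: ms))
  (hl : 0 < l)
  (hwin : forall n, (n \in m :: ms) && (m <= n < m + a + b) = (m <= n < m + l)) :
  ((size (Dunion a b (m :: ms)))%:Z =
    m%:Z - 2 * g%:Z + (size (m :: ms))%:Z +
     \sum_(1 <= j < l) Num.ceil (((a%:Z - j%:Z)%:~R : rat) / (b%:R : rat)))%R.
Proof.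
(* [hsort] and [hm] are part of [hamen]; [b < a] is only used for [0 < a]. *)
have a_gt0 : 0 < a by lia.
have c_le : c <= m.+1 by lia.
have -> : (\sum_(1 <= j < l) Num.ceil (((a%:Z - j%:Z)%:~R : rat) / (b%:R : rat)) =
    (\sum_(1 <= j < l) (a - j + b.-1) %/ b)%N%:Z)%R.
  rewrite (big_morph Posz PoszD (erefl _)); apply: eq_big_nat => j /andP [_ j_lt].
  by apply: ceil_subn_div => //; have := window_le hwin; lia.
have := size_Dunion a_gt0 hb hc hamen hwin.
by rewrite (count_near_gap a_gt0 hb hc hl c_le) -hg; lia.
Qed.
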